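(* Let $R$ be a commutative ring. There exists an $R$-linear equivalence of categories between $\mathrm{Rel}_R$ and $\mathrm{Rel}_R(\varkappa)$.
   Context: $R$ is a commutative unital ring. For $R$-modules $L,M$, an $R$-linear relation from $L$ to $M$ is an $R$-submodule of $L\oplus M$; a relation on $M$ is one from $M$ to $M$. The category $\mathrm{Rel}_R$ has objects pairs $(M,C)$ with $M$ an $R$-module and $C$ an $R$-linear relation on $M$; morphisms $(L,B)\to(M,C)$ are the $R$-linear maps $f\colon L\to M$ such that $(f(x),f(y))\in C$ for all $(x,y)\in B$, with composition of maps and identity maps. $\mathrm{Rep}_R(\varkappa)$ is the category of representations of the Kronecker quiver (two arrows $a,b\colon t\to h$): objects $(M_t,M_h;\mu_a,\mu_b)$ with $\mu_a,\mu_b\in\mathrm{Hom}_R(M_t,M_h)$, morphisms pairs $(f_t,f_h)$ of $R$-linear maps with $f_h\mu_c=\mu'_c f_t$ for $c=a,b$. $\mathrm{Rel}_R(\varkappa)$ is its full subcategory of objects with $\ker(\mu_a)\cap\ker(\mu_b)=0$. *)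

From HB Require Import structures.
From mathcomp Require Import all_boot all_algebra.
Set Implicit Arguments. Unset Strict Implicit. Unset Printing Implicit Defensive.
Import GRing.Theory.
Local Open Scope ring_scope.

Section RelCategories.
Variable R : comPzRingType.

Definition linmap (L M : lmodType R) (f : L -> M) : Prop :=
  forall (a : R) (x y : L), f (a *: x + y) = a *: f x + f y.

(* An R-linear relation on M: an R-submodule of M (+) M, given as a
   predicate on pairs closed under 0 and R-linear combinations. *)
Definition is_linrel (M : lmodType R) (C : M -> M -> Prop) : Prop :=
  C 0 0 /\ forall (a : R) (x y x' y' : M),
    C x y -> C x' y' -> C (a *: x + x') (a *: y + y').

Record relobj := RelObj {
  rmod : lmodType R;
  rrel : rmod -> rmod -> Prop;
  rrel_linrel : is_linrel rrel }.
Arguments rrel : clear implicits.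

Definition relhom (X Y : relobj) (f : rmod X -> rmod Y) : Prop :=
  linmap f /\ forall x y, rrel X x y -> rrel Y (f x) (f y).
Definition RelHom (X Y : relobj) := {f : rmod X -> rmod Y | relhom f}.
Definition relhom_eq (X Y : relobj) (f g : RelHom X Y) : Prop :=
  forall x, sval f x = sval g x.

(* Objects of Rep_R(kappa): representations of the Kronecker quiver *)
Record krep := KRep {
  kt : lmodType R;
  kh : lmodType R;
  ka : kt -> kh;
  kb : kt -> kh;
  ka_lin : linmap ka;
  kb_lin : linmap kb }.
Arguments ka : clear implicits.
Arguments kb : clear implicits.

Definition krel (X : krep) : Prop :=
  forall x : kt X, ka X x = 0 -> kb X x = 0 -> x = 0.

Definition krephom (X Y : krep) (ft : kt X -> kt Y) (fh : kh X -> kh Y) : Prop :=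
  [/\ linmap ft, linmap fh,
      (forall x, fh (ka X x) = ka Y (ft x)) &
      (forall x, fh (kb X x) = kb Y (ft x))].
Definition KHom (X Y : krep) :=
  {p : (kt X -> kt Y) * (kh X -> kh Y) | krephom p.1 p.2}.
Definition khom_t (X Y : krep) (p : KHom X Y) : kt X -> kt Y := (sval p).1.
Definition khom_h (X Y : krep) (p : KHom X Y) : kh X -> kh Y := (sval p).2.
Definition khom_eq (X Y : krep) (p q : KHom X Y) : Prop :=
  (forall x, khom_t p x = khom_t q x) /\ (forall x, khom_h p x = khom_h q x).

(* An R-linear functor Rel_R -> Rel_R(kappa).  Morphisms are compared
   pointwise; identities, composites and R-linear combinations are
   expressed by pointwise equations on the underlying maps. *)
Record relfunctor := RelFunctor {
  Fob : relobj -> krep;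
  Fob_rel : forall X, krel (Fob X);
  Fhom : forall X Y : relobj, RelHom X Y -> KHom (Fob X) (Fob Y);
  Fhom_ext : forall X Y (f g : RelHom X Y),
    relhom_eq f g -> khom_eq (Fhom f) (Fhom g);
  Fhom_id : forall X (f : RelHom X X), (forall x, sval f x = x) ->
    (forall x, khom_t (Fhom f) x = x) /\ (forall x, khom_h (Fhom f) x = x);
  Fhom_comp : forall X Y Z (f : RelHom X Y) (g : RelHom Y Z) (h : RelHom X Z),
    (forall x, sval h x = sval g (sval f x)) ->
    (forall x, khom_t (Fhom h) x = khom_t (Fhom g) (khom_t (Fhom f) x)) /\
    (forall x, khom_h (Fhom h) x = khom_h (Fhom g) (khom_h (Fhom f) x));
  Fhom_linear : forall X Y (r : R) (f g h : RelHom X Y),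
    (forall x, sval h x = r *: sval f x + sval g x) ->
    (forall x, khom_t (Fhom h) x = r *: khom_t (Fhom f) x + khom_t (Fhom g) x) /\
    (forall x, khom_h (Fhom h) x = r *: khom_h (Fhom f) x + khom_h (Fhom g) x) }.

Definition faithful_functor (F : relfunctor) : Prop :=
  forall X Y (f g : RelHom X Y), khom_eq (Fhom F f) (Fhom F g) -> relhom_eq f g.
Definition full_functor (F : relfunctor) : Prop :=
  forall X Y (k : KHom (Fob F X) (Fob F Y)), exists f : RelHom X Y,
    khom_eq (Fhom F f) k.
Definition krep_iso (X Y : krep) : Prop :=
  exists (u : KHom X Y) (v : KHom Y X),
    (forall x, khom_t v (khom_t u x) = x) /\ (forall x, khom_h v (khom_h u x) = x) /\
    (forall y, khom_t u (khom_t v y) = y) /\ (forall y, khom_h u (khom_h v y) = y).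
Definition ess_surj (F : relfunctor) : Prop :=
  forall Y : krep, krel Y -> exists X : relobj, krep_iso (Fob F X) Y.
Definition equivalence (F : relfunctor) : Prop :=
  [/\ faithful_functor F, full_functor F & ess_surj F].

End RelCategories.

From mathcomp Require Import all_boot all_algebra.
From HB Require Import structures.
From Stdlib Require Import ClassicalEpsilon.
Set Implicit Arguments. Unset Strict Implicit. Unset Printing Implicit Defensive.
Import GRing.Theory.
Local Open Scope ring_scope.

(* The functor sends (M, C) to the representation C => M whose two arrows are
   the projections of the submodule C of M (+) M, and f to (f (+) f on C, f).
   The projections have no common kernel.  A morphism between two such
   representations is determined by its head component, which must then
   preserve the relations, so the functor is fully faithful.  Conversely, if
   mu_a and mu_b have no common kernel, x |-> (mu_a x, mu_b x) identifies M_t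
   with the relation {(mu_a x, mu_b x)} on M_h, whose image is thus
   isomorphic to the given representation. *)

Definition asbool (P : Prop) : bool :=
  if excluded_middle_informative P then true else false.

Lemma asboolP (P : Prop) : reflect P (asbool P).
Proof. by rewrite /asbool; case: excluded_middle_informative => h; constructor. Qed.

Section LinearMaps.
Variables (R : comPzRingType) (L M : lmodType R).

Lemma linmap0 (f : L -> M) : linmap f -> f 0 = 0.
Proof.
move=> f_lin; have := f_lin 1 0 0; rewrite !scale1r addr0 => f00.
by rewrite -[in LHS](addrK (f 0) (f 0)) -f00 subrr.
Qed.

Lemma linmapB (f : L -> M) : linmap f -> forall x y, f (x - y) = f x - f y.
Proof. by move=> f_lin x y; rewrite -scaleN1r addrC f_lin scaleN1r addrC. Qed.

Lemma linmap_jointly_inj (f g : L -> M) : linmap f -> linmap g ->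
    (forall x, f x = 0 -> g x = 0 -> x = 0) ->
  forall x y, f x = f y -> g x = g y -> x = y.
Proof.
move=> f_lin g_lin ker0 x y fxy gxy; apply/eqP; rewrite -subr_eq0; apply/eqP.
by apply: ker0; rewrite linmapB // ?fxy ?gxy subrr.
Qed.

End LinearMaps.

Section RelationModule.
Variables (R : comPzRingType) (X : relobj R).

Definition relpred : pred (rmod X * rmod X) := fun p => asbool (@rrel _ X p.1 p.2).

Lemma relpred_submod_closed : submod_closed relpred.
Proof.
have [C00 C_lin] := rrel_linrel X; split; first exact/asboolP.
move=> a [x y] [x' y'] /asboolP C_xy /asboolP C_xy'; exact/asboolP/C_lin.
Qed.

HB.instance Definition _ := GRing.isSubmodClosed.Build R _ relpred
  (GRing.submod_closed_semi relpred_submod_closed).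

Record relmod := RelMod { relval : rmod X * rmod X; _ : relpred relval }.
HB.instance Definition _ := [isSub for relval].
HB.instance Definition _ := [Choice of relmod by <:].
HB.instance Definition _ := [SubChoice_isSubLmodule of relmod by <:].

Definition relpair (x y : rmod X) (C_xy : @rrel _ X x y) : relmod :=
  RelMod (introT (asboolP _) C_xy : relpred (x, y)).

Definition rfst (c : relmod) : rmod X := (val c).1.
Definition rsnd (c : relmod) : rmod X := (val c).2.

Lemma rfst_lin : linmap rfst. Proof. by move=> a x y; rewrite /rfst raddfD linearZ. Qed.
Lemma rsnd_lin : linmap rsnd. Proof. by move=> a x y; rewrite /rsnd raddfD linearZ. Qed.

Lemma rfst_relpair x y (C_xy : @rrel _ X x y) : rfst (relpair C_xy) = x.
Proof. by []. Qed.

Lemma rsnd_relpair x y (C_xy : @rrel _ X x y) : rsnd (relpair C_xy) = y.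
Proof. by []. Qed.

Lemma relmodP (c : relmod) : @rrel _ X (rfst c) (rsnd c).
Proof. by case: c => [[x y] C_xy]; apply/asboolP. Qed.

Lemma relmod_eq (c d : relmod) : rfst c = rfst d -> rsnd c = rsnd d -> c = d.
Proof.
by move=> eq1 eq2; apply: val_inj;
  rewrite [val c]surjective_pairing [val d]surjective_pairing -/(rfst c) -/(rsnd c) eq1 eq2.
Qed.

Definition relrep : krep R := KRep rfst_lin rsnd_lin.

Lemma relrep_krel : krel relrep.
Proof. by move=> c /= c1 c2; apply: relmod_eq; rewrite ?c1 ?c2 /rfst /rsnd raddf0. Qed.

End RelationModule.

Section RelationMorphisms.
Variables (R : comPzRingType) (X Y : relobj R).

Definition relmod_map (f : RelHom X Y) (c : relmod X) : relmod Y :=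
  relpair (proj2 (svalP f) _ _ (relmodP c)).

Lemma rfst_map (f : RelHom X Y) c : rfst (relmod_map f c) = sval f (rfst c).
Proof. by []. Qed.

Lemma rsnd_map (f : RelHom X Y) c : rsnd (relmod_map f c) = sval f (rsnd c).
Proof. by []. Qed.

Lemma relmod_map_lin (f : RelHom X Y) : linmap (relmod_map f).
Proof.
move=> a c d; have f_lin := proj1 (svalP f); apply: relmod_eq.
- by rewrite [RHS]rfst_lin !rfst_map rfst_lin f_lin.
- by rewrite [RHS]rsnd_lin !rsnd_map rsnd_lin f_lin.
Qed.

Definition relrep_map (f : RelHom X Y) : KHom (relrep X) (relrep Y) :=
  exist _ (relmod_map f, sval f)
    (And4 (relmod_map_lin f) (proj1 (svalP f)) (fun=> erefl) (fun=> erefl)).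

End RelationMorphisms.

Section Functoriality.
Variable R : comPzRingType.

Lemma relrep_map_ext (X Y : relobj R) (f g : RelHom X Y) :
  relhom_eq f g -> khom_eq (relrep_map f) (relrep_map g).
Proof.
move=> fg; split=> [c|x] /=; last exact: fg.
by apply: relmod_eq; rewrite !(rfst_map, rsnd_map) fg.
Qed.

Lemma relrep_map_id (X : relobj R) (f : RelHom X X) : (forall x, sval f x = x) ->
  (forall c, khom_t (relrep_map f) c = c) /\ (forall x, khom_h (relrep_map f) x = x).
Proof.
move=> f_id; split=> [c|x] /=; last exact: f_id.
by apply: relmod_eq; rewrite !(rfst_map, rsnd_map) f_id.
Qed.

Lemma relrep_map_comp (X Y Z : relobj R) (f : RelHom X Y) (g : RelHom Y Z)
    (h : RelHom X Z) : (forall x, sval h x = sval g (sval f x)) ->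
  (forall c, khom_t (relrep_map h) c = khom_t (relrep_map g) (khom_t (relrep_map f) c)) /\
  (forall x, khom_h (relrep_map h) x = khom_h (relrep_map g) (khom_h (relrep_map f) x)).
Proof.
move=> h_gf; split=> [c|x] /=; last exact: h_gf.
by apply: relmod_eq; rewrite !(rfst_map, rsnd_map) h_gf.
Qed.

Lemma relrep_map_linear (X Y : relobj R) (r : R) (f g h : RelHom X Y) :
    (forall x, sval h x = r *: sval f x + sval g x) ->
  (forall c, khom_t (relrep_map h) c =
     r *: khom_t (relrep_map f) c + khom_t (relrep_map g) c) /\
  (forall x, khom_h (relrep_map h) x =
     r *: khom_h (relrep_map f) x + khom_h (relrep_map g) x).
Proof.
move=> h_rfg; split=> [c|x] /=; last exact: h_rfg.
apply: relmod_eq.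
- by rewrite [RHS]rfst_lin !rfst_map h_rfg.
- by rewrite [RHS]rsnd_lin !rsnd_map h_rfg.
Qed.

Definition relrep_functor : relfunctor R :=
  RelFunctor (@relrep_krel R) relrep_map_ext relrep_map_id relrep_map_comp
    relrep_map_linear.

End Functoriality.

Section Equivalence.
Variable R : comPzRingType.

Lemma relrep_functor_faithful : faithful_functor (relrep_functor R).
Proof. by move=> X Y f g [_ fg]. Qed.

Lemma relrep_functor_full : full_functor (relrep_functor R).
Proof.
move=> X Y [[ft fh] /= [ft_lin fh_lin fh_a fh_b]].
have fh_rel : relhom fh.
  split=> // x y C_xy; have := fh_a (relpair C_xy); have := fh_b (relpair C_xy).
  rewrite /= rfst_relpair rsnd_relpair => -> ->; exact: relmodP.
exists (exist _ fh fh_rel); split=> [c|x] //=.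
by apply: relmod_eq; rewrite !(rfst_map, rsnd_map) /= (fh_a, fh_b).
Qed.

Section ImageRelation.
Variable Y : krep R.
Hypothesis Y_krel : krel Y.

Definition image_rel (u v : kh Y) : Prop := exists x, u = @ka _ Y x /\ v = @kb _ Y x.

Lemma image_rel_linrel : is_linrel image_rel.
Proof.
split; first by exists 0; rewrite (linmap0 (@ka_lin _ Y)) (linmap0 (@kb_lin _ Y)).
move=> a _ _ _ _ [x [-> ->]] [x' [-> ->]]; exists (a *: x + x').
by rewrite ka_lin kb_lin.
Qed.

Definition image_relobj : relobj R := RelObj image_rel_linrel.

Definition image_pair (x : kt Y) : relmod image_relobj :=
  @relpair _ image_relobj _ _ (ex_intro _ x (conj erefl erefl)).

Definition image_preim (c : relmod image_relobj) : kt Y :=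
  proj1_sig (constructive_indefinite_description _ (relmodP c)).

Lemma image_preimP c :
  rfst c = @ka _ Y (image_preim c) /\ rsnd c = @kb _ Y (image_preim c).
Proof. by rewrite /image_preim; case: constructive_indefinite_description. Qed.

Lemma ka_kb_inj x x' : @ka _ Y x = @ka _ Y x' -> @kb _ Y x = @kb _ Y x' -> x = x'.
Proof. exact: linmap_jointly_inj (@ka_lin _ Y) (@kb_lin _ Y) Y_krel x x'. Qed.

Lemma image_pair_lin : linmap image_pair.
Proof.
move=> a x y; apply: relmod_eq; rewrite /image_pair.
- by rewrite [RHS]rfst_lin !rfst_relpair ka_lin.
- by rewrite [RHS]rsnd_lin !rsnd_relpair kb_lin.
Qed.

Lemma image_preim_lin : linmap image_preim.
Proof.
move=> a c d; apply: ka_kb_inj.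
- by rewrite ka_lin -!(proj1 (image_preimP _)) rfst_lin.
- by rewrite kb_lin -!(proj2 (image_preimP _)) rsnd_lin.
Qed.

Definition image_pair_hom : KHom Y (relrep image_relobj) :=
  exist _ (image_pair, id)
    (And4 image_pair_lin (fun a x y => erefl) (fun=> erefl) (fun=> erefl)).

Definition image_preim_hom : KHom (relrep image_relobj) Y :=
  exist _ (image_preim, id)
    (And4 image_preim_lin (fun a x y => erefl)
       (fun c => proj1 (image_preimP c)) (fun c => proj2 (image_preimP c))).

Lemma relrep_image_iso : krep_iso (relrep image_relobj) Y.
Proof.
exists image_preim_hom, image_pair_hom; split; [|split; [|split]] => // [c|x] /=.
- by have [c1 c2] := image_preimP c; apply: relmod_eq.
- by have [c1 c2] := image_preimP (image_pair x); apply: ka_kb_inj.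
Qed.

End ImageRelation.

Lemma relrep_functor_ess_surj : ess_surj (relrep_functor R).
Proof. by move=> Y Y_krel; exists (image_relobj Y); exact: relrep_image_iso. Qed.

End Equivalence.

Theorem lemma4p2 (R : comPzRingType) :
  exists F : relfunctor R, equivalence F.
Proof.
exists (relrep_functor R); split.
- exact: relrep_functor_faithful.
- exact: relrep_functor_full.
- exact: relrep_functor_ess_surj.
Qed.
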